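(* Let $0\le c\le (3-\sqrt5)/4$. For every graphon $W$, $$m_D(W)-\tfrac1{16}\ \ge\ c\left(m_{C_4}(W)-\tfrac18\right),$$ where $D=K_{1,1,2}$ is the diamond (the $4$-cycle plus one diagonal).
   Context: For a graph $H$ and a graphon $W$ (a measurable symmetric function $W:[0,1]^2\to[0,1]$), let $t_H(W)=\int_{[0,1]^{V(H)}}\prod_{uv\in E(H)}W(x_u,x_v)\,dx$ and $m_H(W)=t_H(W)+t_H(1-W)$. *)

From HB Require Import structures.
From mathcomp Require Import all_boot all_order all_algebra.
From mathcomp Require Import all_classical all_reals all_analysis.
Set Implicit Arguments. Unset Strict Implicit. Unset Printing Implicit Defensive.
Import Order.TTheory GRing.Theory Num.Theory.
Local Open Scope classical_set_scope.
Local Open Scope ring_scope.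

(* A graphon, represented as a function R -> R -> R whose values on
   [0,1]^2 are the relevant ones; we require the properties everywhere
   (any graphon on [0,1]^2 extends, e.g. by 0, to such a function). *)
Definition graphon (R : realType) (W : R -> R -> R) : Prop :=
  [/\ measurable_fun [set: R * R] (fun p : R * R => W p.1 p.2),
      (forall x y, W x y = W y x) &
      (forall x y, 0 <= W x y <= 1)].

Definition vert4 (R : Type) (x0 x1 x2 x3 : R) (i : 'I_4) : R :=
  match val i with 0 => x0 | 1 => x1 | 2 => x2 | _ => x3 end.

(* Homomorphism density t_H(W) of a graph H on vertex set {0,1,2,3}
   with edge list E, as an iterated Lebesgue integral over [0,1]^4
   (equal to the integral over [0,1]^4 by Tonelli, integrand >= 0). *)
Definition t4 (R : realType) (E : seq ('I_4 * 'I_4)) (W : R -> R -> R) : R :=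
  fine (\int[lebesgue_measure]_(x0 in `[0%R, 1%R])
        \int[lebesgue_measure]_(x1 in `[0%R, 1%R])
        \int[lebesgue_measure]_(x2 in `[0%R, 1%R])
        \int[lebesgue_measure]_(x3 in `[0%R, 1%R])
          (\prod_(e <- E) W (vert4 x0 x1 x2 x3 e.1) (vert4 x0 x1 x2 x3 e.2))%:E)%E.

Definition m4 (R : realType) (E : seq ('I_4 * 'I_4)) (W : R -> R -> R) : R :=
  t4 E W + t4 E (fun x y => 1 - W x y).

Definition C4_edges : seq ('I_4 * 'I_4) :=
  [:: (inord 0, inord 1); (inord 1, inord 2); (inord 2, inord 3); (inord 3, inord 0)].

Definition diamond_edges : seq ('I_4 * 'I_4) :=
  (inord 0, inord 2) :: C4_edges.

(* Write W = 1/2 + U, so that U^2 <= 1/4 and 1 - W = 1/2 - U.  In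
   m_H(W) = t_H(1/2 + U) + t_H(1/2 - U) the monomials of odd degree in U cancel;
   in terms of the U-densities e of an edge, s of a cherry, t of a 4-cycle and
   p of a paw (a triangle with a pendant edge) this leaves
     m_D(W) - 1/16 = 2s + e^2/2 + t + 4p,    m_{C4}(W) - 1/8 = 2s + e^2 + 2t.
   Only p can be negative.  With d the U-degree, h the U-codegree and
   g(z) = int U(z,x) h(x,z) dx, we have p = int d g, and expanding
   int (l d + g)^2 >= 0 with l = 1 - c, together with int g^2 <= t/4
   (Cauchy-Schwarz and U^2 <= 1/4), gives 4p >= -2 l s - t/(2l).  The
   difference of the two sides is then at least ((1-c)(1-2c) - 1/2) t/(1-c),
   and (1-c)(1-2c) >= 1/2 is exactly c <= (3 - sqrt 5)/4. *)

From HB Require Import structures.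
From mathcomp Require Import all_boot all_order all_algebra.
From mathcomp Require Import all_classical all_reals all_analysis.
From mathcomp Require Import measurable_realfun ring lra.
Import Order.TTheory GRing.Theory Num.Theory.
Local Open Scope classical_set_scope.
Local Open Scope ring_scope.

Section bounded_mfun.
Context {R : realType} {d : measure_display} {T : measurableType d}.

Definition bounded_mfun (f : T -> R) :=
  measurable_fun setT f /\ exists B : R, forall x, `|f x| <= B.

Lemma bounded_mfun_cst k : bounded_mfun (fun _ => k).
Proof. by split; [exact: measurable_cst | exists `|k|]. Qed.

Lemma bounded_mfunD {f g} : bounded_mfun f -> bounded_mfun g ->
  bounded_mfun (fun x => f x + g x).
Proof.
move=> [mf [B hB]] [mg [C hC]]; split; first exact: measurable_funD.
by exists (B + C) => x; rewrite (le_trans (ler_normD _ _))// lerD.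
Qed.

Lemma bounded_mfunM {f g} : bounded_mfun f -> bounded_mfun g ->
  bounded_mfun (fun x => f x * g x).
Proof.
move=> [mf [B hB]] [mg [C hC]]; split; first exact: measurable_funM.
by exists (B * C) => x; rewrite normrM ler_pM.
Qed.

Lemma bounded_mfunZ k {f} : bounded_mfun f -> bounded_mfun (fun x => k * f x).
Proof. exact/bounded_mfunM/bounded_mfun_cst. Qed.

Lemma eq_bounded_mfun {f g} : f =1 g -> bounded_mfun f -> bounded_mfun g.
Proof. by move=> /funext->. Qed.

End bounded_mfun.

Section bounded_mfun_comp.
Context {R : realType} {d d' : measure_display}.
Context {T : measurableType d} {S : measurableType d'}.

Lemma bounded_mfun_comp {f : T -> R} {m : S -> T} :
  bounded_mfun f -> measurable_fun setT m -> bounded_mfun (f \o m).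
Proof.
move=> [mf [B hB]] mm; split; last by exists B => x; exact: hB.
exact: measurableT_comp mf mm.
Qed.

Lemma bounded_mfun_pair2 {g : T * R -> R} t :
  bounded_mfun g -> bounded_mfun (fun y => g (t, y)).
Proof. by move=> [mg [B hB]]; split; [exact: measurable_fun_pair2 | exists B]. Qed.

Lemma bounded_mfun_pair1 {g : R * T -> R} t :
  bounded_mfun g -> bounded_mfun (fun x => g (x, t)).
Proof. by move=> [mg [B hB]]; split; [exact: measurable_fun_pair1 | exists B]. Qed.

End bounded_mfun_comp.

Lemma bounded_mfun_swap {R : realType} {K : R -> R -> R} :
  bounded_mfun (fun p : R * R => K p.1 p.2) ->
  bounded_mfun (fun p : R * R => K p.2 p.1).
Proof.
move=> bK; have := bounded_mfun_comp bK (@measurable_swap _ _ R R).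
by apply: eq_bounded_mfun.
Qed.

Ltac measurable_proj := cbv beta;
  lazymatch goal with
  | |- measurable_fun _ (fun x => (@?g x).1) =>
      apply: (measurableT_comp measurable_fst (_ : measurable_fun setT g)); measurable_proj
  | |- measurable_fun _ (fun x => (@?g x).2) =>
      apply: (measurableT_comp measurable_snd (_ : measurable_fun setT g)); measurable_proj
  | |- measurable_fun _ fst => exact: measurable_fst
  | |- measurable_fun _ snd => exact: measurable_snd
  | |- measurable_fun _ (fun x => x) => exact: measurable_id
  | |- _ => exact: measurable_cst
  end.

Section integral_on_unit_interval.
Context {R : realType}.
Local Notation mu := (@lebesgue_measure R).
Local Notation I01 := ([set` `[0%R, 1%R]] : set R).

Definition int01 (f : R -> R) : R := \int[mu]_(x in I01) f x.

Let measurable_I01 : measurable I01. Proof. exact: measurable_itv. Qed.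

Let lebesgue_I01 : mu I01 = 1%E.
Proof. by rewrite lebesgue_measure_itv/= lte01 oppr0 adde0. Qed.

Lemma integrable_bounded_mfun f : bounded_mfun f -> mu.-integrable I01 (EFin \o f).
Proof.
move=> [mf [B hB]]; apply/integrableP; split.
  by apply/measurable_EFinP; exact: measurable_funS mf.
apply: (@le_lt_trans _ _ (\int[mu]_(x in I01) B%:E)%E).
  apply: ge0_le_integral => //.
    by apply/measurable_EFinP/measurableT_comp => //; exact: measurable_funS mf.
  by move=> x _; rewrite /= lee_fin (le_trans _ (hB x)).
by rewrite integral_cst// [X in (_ * X)%E]lebesgue_I01 mule1 ltry.
Qed.

Lemma int01_EFin f : bounded_mfun f ->
  (\int[mu]_(x in I01) (f x)%:E)%E = (int01 f)%:E.
Proof. by move=> bf; rewrite fineK// integrable_fin_num// integrable_bounded_mfun. Qed.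

Lemma int01_cst k : int01 (fun _ => k) = k.
Proof.
rewrite /int01 Rintegral_cst// [X in _ * X](_ : _ = 1) ?mulr1//.
by rewrite -[LHS]/(fine (mu I01)) lebesgue_I01.
Qed.

Lemma int01D f g : bounded_mfun f -> bounded_mfun g ->
  int01 (fun x => f x + g x) = int01 f + int01 g.
Proof. by move=> bf bg; apply: RintegralD => //; exact: integrable_bounded_mfun. Qed.

Lemma int01Zl k f : bounded_mfun f -> int01 (fun x => k * f x) = k * int01 f.
Proof. by move=> bf; apply: RintegralZl => //; exact: integrable_bounded_mfun. Qed.

Lemma int01Zr k f : bounded_mfun f -> int01 (fun x => f x * k) = int01 f * k.
Proof.
by move=> bf; rewrite mulrC -int01Zl//; congr int01; apply/funext => x; rewrite mulrC.
Qed.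

Lemma ler_int01 {f g} : bounded_mfun f -> bounded_mfun g -> (forall x, f x <= g x) ->
  int01 f <= int01 g.
Proof. by move=> bf bg fg; apply: le_Rintegral => //; exact: integrable_bounded_mfun. Qed.

Lemma int01_ge0 f : (forall x, 0 <= f x) -> 0 <= int01 f.
Proof. by move=> f0; apply: Rintegral_ge0. Qed.

Lemma eq_int01 {f g} : f =1 g -> int01 f = int01 g.
Proof. by move=> /funext->. Qed.

Lemma ler_norm_int01 f B : bounded_mfun f -> (forall x, `|f x| <= B) ->
  `|int01 f| <= B.
Proof.
move=> bf hB; have bB k : bounded_mfun (fun _ : R => k) := bounded_mfun_cst k.
rewrite ler_norml; apply/andP; split.
  rewrite -[X in X <= _]int01_cst; apply: ler_int01 => // x.
  by have := hB x; rewrite ler_norml => /andP[].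
rewrite -[X in _ <= X]int01_cst; apply: ler_int01 => // x.
by have := hB x; rewrite ler_norml => /andP[].
Qed.

Lemma bounded_mfun_int01 {d} {T : measurableType d} {F : T -> R -> R} :
  bounded_mfun (fun p : T * R => F p.1 p.2) -> bounded_mfun (fun t => int01 (F t)).
Proof.
move=> bF; have [mF [B hB]] := bF.
have bFt t : bounded_mfun (F t) := bounded_mfun_pair2 t bF.
have FB0 p : 0 <= F p.1 p.2 + B by have := hB p; rewrite ler_norml => /andP[]; lra.
split; last by exists B => t; apply: ler_norm_int01 => // y; exact: (hB (t, y)).
(* Shifted by B the integrand is nonnegative, and Tonelli gives measurability. *)
pose G p := ((\1_I01 p.2 : R) * (F p.1 p.2 + B))%:E.
have shiftE t : int01 (F t) = fine (fubini_F mu G t) - B.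
  have -> : int01 (F t) = int01 (fun y => F t y + B) - B.
    by rewrite int01D ?int01_cst ?addrK//; exact: bounded_mfun_cst.
  rewrite /int01 /Rintegral /fubini_F integral_mkcond; congr (fine _ - _).
  apply: eq_integral => y _; rewrite patchE /G /= indicE.
  by case: (y \in _); rewrite ?mul1r ?mul0r.
rewrite (funext shiftE); apply: measurable_funB => //.
apply: (measurableT_comp (fine_measurable measurableT)).
apply: measurable_fun_fubini_tonelli_F.
  apply/measurable_EFinP/measurable_funM; last exact: measurable_funD.
  by apply: measurableT_comp => //; exact: measurable_indic.
by move=> p; rewrite lee_fin mulr_ge0// indicE; case: (_ \in _).
Qed.

Lemma int01_int01_indic {K : R -> R -> R} :
  bounded_mfun (fun p : R * R => K p.1 p.2) ->
  int01 (fun x => int01 (K x)) =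
  fine (\int[mu]_x \int[mu]_y ((\1_I01 x : R) * (\1_I01 y : R) * K x y)%:E)%E.
Proof.
move=> bK; rewrite /int01 /Rintegral; congr fine.
rewrite integral_mkcond; apply: eq_integral => x _; rewrite patchE.
case: ifPn => xI.
  rewrite fineK; last first.
    by rewrite integrable_fin_num//; exact: integrable_bounded_mfun (bounded_mfun_pair2 x bK).
  rewrite integral_mkcond; apply: eq_integral => y _.
  by rewrite patchE !indicE xI mul1r; case: ifPn => //= _; rewrite ?mul1r ?mul0r.
by rewrite integral0_eq // => y _; rewrite indicE (negbTE xI) !mul0r.
Qed.

Lemma fubini_int01_ge0 (K : R -> R -> R) :
  bounded_mfun (fun p : R * R => K p.1 p.2) -> (forall x y, 0 <= K x y) ->
  int01 (fun x => int01 (K x)) = int01 (fun y => int01 (K^~ y)).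
Proof.
move=> bK K0; have [mK _] := bK.
rewrite (int01_int01_indic bK).
rewrite (int01_int01_indic (K := fun y x => K x y) (bounded_mfun_swap bK)).
pose G p := ((\1_I01 p.1 : R) * (\1_I01 p.2 : R) * K p.1 p.2)%:E.
have mI : measurable_fun setT (fun x : R => (\1_I01 x : R)).
  exact: measurable_indic.
have mG : measurable_fun setT G.
  apply/measurable_EFinP; apply: measurable_funM => //.
  by apply: measurable_funM; exact: measurableT_comp.
have G0 p : (0 <= G p)%E.
  by rewrite lee_fin !mulr_ge0// indicE; case: (_ \in _).
rewrite (@fubini_tonelli _ _ _ _ _ mu mu G mG G0); congr fine.
by apply: eq_integral => y _; apply: eq_integral => x _; rewrite /G /= [X in X * _]mulrC.
Qed.

Lemma fubini_int01 (F : R -> R -> R) : bounded_mfun (fun p : R * R => F p.1 p.2) ->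
  int01 (fun x => int01 (F x)) = int01 (fun y => int01 (F^~ y)).
Proof.
move=> bF; have [mF [B hB]] := bF.
pose K x y := F x y + B.
have bK : bounded_mfun (fun p : R * R => K p.1 p.2).
  exact: bounded_mfunD bF (bounded_mfun_cst B).
have K0 x y : 0 <= K x y by have := hB (x, y); rewrite /K ler_norml => /andP[]; lra.
have bB : bounded_mfun (fun _ : R => B) := bounded_mfun_cst B.
have shift1 x : int01 (F x) = int01 (K x) - B.
  by rewrite int01D ?int01_cst ?addrK//; exact: bounded_mfun_pair2 x bF.
have shift2 y : int01 (F^~ y) = int01 (K^~ y) - B.
  by rewrite int01D ?int01_cst ?addrK//; exact: bounded_mfun_pair1 y bF.
rewrite (eq_int01 shift1) (eq_int01 shift2) !int01D ?int01_cst;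
  try exact: bounded_mfun_cst.
- by rewrite fubini_int01_ge0.
- exact: bounded_mfun_int01 (bounded_mfun_swap bK).
- exact: bounded_mfun_int01 bK.
Qed.

Lemma sqr_int01_le {f} : bounded_mfun f -> int01 f ^+ 2 <= int01 (fun x => f x ^+ 2).
Proof.
move=> bf; set m := int01 f.
have bf2 : bounded_mfun (fun x => f x ^+ 2) := bounded_mfunM bf bf.
have : 0 <= int01 (fun x => (f x - m) ^+ 2) by apply: int01_ge0 => x; exact: sqr_ge0.
rewrite (@eq_int01 _ (fun x => f x ^+ 2 + ((-2 * m) * f x + m ^+ 2))); last first.
  by move=> x; rewrite /=; ring.
have bfm : bounded_mfun (fun x => -2 * m * f x) := bounded_mfunZ _ bf.
have bm : bounded_mfun (fun _ : R => m ^+ 2) := bounded_mfun_cst _.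
rewrite int01D ?int01D ?int01_cst ?int01Zl -/m //; last exact: bounded_mfunD.
by move=> h; nra.
Qed.

Lemma int01_sqr_combination_ge0 {f g} l : bounded_mfun f -> bounded_mfun g ->
  0 <= l ^+ 2 * int01 (fun x => f x ^+ 2) + 2 * l * int01 (fun x => f x * g x)
       + int01 (fun x => g x ^+ 2).
Proof.
move=> bf bg.
have bff : bounded_mfun (fun x => f x ^+ 2) := bounded_mfunM bf bf.
have bfg : bounded_mfun (fun x => f x * g x) := bounded_mfunM bf bg.
have bgg : bounded_mfun (fun x => g x ^+ 2) := bounded_mfunM bg bg.
have : 0 <= int01 (fun x => (l * f x + g x) ^+ 2).
  by apply: int01_ge0 => x; exact: sqr_ge0.
rewrite (@eq_int01 _ (fun x => l ^+ 2 * f x ^+ 2 + (2 * l * (f x * g x) + g x ^+ 2)));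
  last by move=> x; rewrite /=; ring.
rewrite int01D ?int01D ?int01Zl ?addrA//; try exact: bounded_mfunZ.
exact: bounded_mfunD (bounded_mfunZ _ bfg) bgg.
Qed.

Definition int2 (F : R -> R -> R) : R := int01 (fun a => int01 (F a)).
Definition int3 (F : R -> R -> R -> R) : R := int01 (fun a => int2 (F a)).
Definition int4 (P : R -> R -> R -> R -> R) : R := int01 (fun a => int3 (P a)).

Definition uncurry4 (P : R -> R -> R -> R -> R) (q : ((R * R) * R) * R) : R :=
  P q.1.1.1 q.1.1.2 q.1.2 q.2.

Definition bounded_mfun4 (P : R -> R -> R -> R -> R) := bounded_mfun (uncurry4 P).

Section bounded_mfun4.
Context {P : R -> R -> R -> R -> R}.
Hypothesis bP : bounded_mfun4 P.

Let bounded_mfun_int01_d :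
  bounded_mfun (fun q : (R * R) * R => int01 (P q.1.1 q.1.2 q.2)).
Proof. exact: bounded_mfun_int01 bP. Qed.

Let bounded_mfun_int2_cd :
  bounded_mfun (fun q : R * R => int2 (P q.1 q.2)).
Proof. exact: bounded_mfun_int01 bounded_mfun_int01_d. Qed.

Lemma bounded_mfun4_int3 : bounded_mfun (fun a => int3 (P a)).
Proof. exact: bounded_mfun_int01 bounded_mfun_int2_cd. Qed.

Lemma bounded_mfun4_int2 a : bounded_mfun (fun b => int2 (P a b)).
Proof. exact: bounded_mfun_pair2 a bounded_mfun_int2_cd. Qed.

Lemma bounded_mfun4_int01 a b : bounded_mfun (fun c => int01 (P a b c)).
Proof. exact: bounded_mfun_pair2 (a, b) bounded_mfun_int01_d. Qed.

Lemma bounded_mfun4_pair a b c : bounded_mfun (P a b c).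
Proof. exact: bounded_mfun_pair2 (a, b, c) bP. Qed.

End bounded_mfun4.

Lemma eq_int4 P Q : (forall a b c d, P a b c d = Q a b c d) -> int4 P = int4 Q.
Proof.
move=> PQ; apply: eq_int01 => a; apply: eq_int01 => b; apply: eq_int01 => c.
by apply: eq_int01 => d; exact: PQ.
Qed.

Lemma int4D P Q : bounded_mfun4 P -> bounded_mfun4 Q ->
  int4 (fun a b c d => P a b c d + Q a b c d) = int4 P + int4 Q.
Proof.
move=> bP bQ; rewrite /int4 -int01D; try exact: bounded_mfun4_int3.
apply: eq_int01 => a; rewrite /int3 -int01D; try exact: bounded_mfun4_int2.
apply: eq_int01 => b; rewrite /int2 -int01D; try exact: bounded_mfun4_int01.
by apply: eq_int01 => c; rewrite -int01D//; exact: bounded_mfun4_pair.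
Qed.

Lemma int4Zl k P : bounded_mfun4 P -> int4 (fun a b c d => k * P a b c d) = k * int4 P.
Proof.
move=> bP; rewrite /int4 -int01Zl; last exact: bounded_mfun4_int3.
apply: eq_int01 => a; rewrite /int3 -int01Zl; last exact: bounded_mfun4_int2.
apply: eq_int01 => b; rewrite /int2 -int01Zl; last exact: bounded_mfun4_int01.
by apply: eq_int01 => c; rewrite -int01Zl//; exact: bounded_mfun4_pair.
Qed.

Lemma int4_cst k : int4 (fun _ _ _ _ => k) = k.
Proof. by rewrite /int4 /int3 /int2 !int01_cst. Qed.

Lemma int4_int01 P Q : (forall a b c, int01 (P a b c) = Q a b c) -> int4 P = int3 Q.
Proof. by move=> PQ; apply: eq_int01 => a; apply: eq_int01 => b; apply: eq_int01. Qed.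

Lemma int3_int01 F G : (forall a b, int01 (F a b) = G a b) -> int3 F = int2 G.
Proof. by move=> FG; apply: eq_int01 => a; apply: eq_int01. Qed.

Lemma int2_int01 F G : (forall a, int01 (F a) = G a) -> int2 F = int01 G.
Proof. exact: eq_int01. Qed.

Lemma measurable_vert4 (i : 'I_4) :
  measurable_fun setT (fun q : ((R * R) * R) * R => vert4 q.1.1.1 q.1.1.2 q.1.2 q.2 i).
Proof. by rewrite /vert4; case: (val i) => [|[|[|_]]]; measurable_proj. Qed.

Lemma bounded_mfun4_hom E (V : R -> R -> R) : bounded_mfun (fun p : R * R => V p.1 p.2) ->
  bounded_mfun4 (fun a b c d => \prod_(x <- E) V (vert4 a b c d x.1) (vert4 a b c d x.2)).
Proof.
move=> bV; rewrite /bounded_mfun4 /uncurry4; elim: E => [|x E IH].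
  by apply: (eq_bounded_mfun _ (bounded_mfun_cst 1)) => q; rewrite big_nil.
have bVx := bounded_mfun_comp bV
  (measurable_fun_pair (measurable_vert4 x.1) (measurable_vert4 x.2)).
by apply: (eq_bounded_mfun _ (bounded_mfunM bVx IH)) => q; rewrite big_cons.
Qed.

Lemma t4_int4 E (V : R -> R -> R) : bounded_mfun (fun p : R * R => V p.1 p.2) ->
  t4 E V = int4 (fun a b c d => \prod_(x <- E) V (vert4 a b c d x.1) (vert4 a b c d x.2)).
Proof.
move=> /(bounded_mfun4_hom E) bP; rewrite /t4 /int4 [in RHS]/int01 /Rintegral; congr fine.
apply: eq_integral => a _; rewrite /int3 -int01_EFin; last exact: bounded_mfun4_int2 bP a.
apply: eq_integral => b _; rewrite /int2 -int01_EFin; last exact: bounded_mfun4_int01 bP a b.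
by apply: eq_integral => c _; rewrite -int01_EFin//; exact: bounded_mfun4_pair bP a b c.
Qed.

End integral_on_unit_interval.

Lemma hom4_diamond {T : Type} {S : comRingType} (V : T -> T -> S) a b c d :
  \prod_(x <- diamond_edges) V (vert4 a b c d x.1) (vert4 a b c d x.2) =
  V a c * (V a b * (V b c * (V c d * V d a))).
Proof. by rewrite /diamond_edges /C4_edges !big_cons big_nil /vert4 /= !inordK// mulr1. Qed.

Lemma hom4_C4 {T : Type} {S : comRingType} (V : T -> T -> S) a b c d :
  \prod_(x <- C4_edges) V (vert4 a b c d x.1) (vert4 a b c d x.2) =
  V a b * (V b c * (V c d * V d a)).
Proof. by rewrite /C4_edges !big_cons big_nil /vert4 /= !inordK// mulr1. Qed.

Section graphon_densities.
Context {R : realType}.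
Variable W : R -> R -> R.
Hypothesis gW : graphon W.

Definition U x y := W x y - 1 / 2.

Let measurable_W : measurable_fun setT (fun p : R * R => W p.1 p.2).
Proof. by case: gW. Qed.

Let W01 x y : 0 <= W x y <= 1.
Proof. by case: gW => _ _; exact. Qed.

Lemma U_sym x y : U x y = U y x.
Proof. by case: gW => _ W_sym _; rewrite /U W_sym. Qed.

Lemma sqrU_le x y : U x y ^+ 2 <= 1 / 4.
Proof. by have := W01 x y; rewrite /U => /andP[? ?]; nra. Qed.

Lemma bounded_mfun_W : bounded_mfun (fun p : R * R => W p.1 p.2).
Proof.
split=> //; exists 1 => p.
by have := W01 p.1 p.2; rewrite ler_norml => /andP[? ?]; apply/andP; split; lra.
Qed.

Lemma bounded_mfun_1W : bounded_mfun (fun p : R * R => 1 - W p.1 p.2).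
Proof.
apply: (eq_bounded_mfun _ (bounded_mfunD (bounded_mfun_cst 1)
  (bounded_mfunZ (-1) bounded_mfun_W))).
by move=> p; rewrite mulN1r.
Qed.

Lemma bounded_mfun_U : bounded_mfun (fun p : R * R => U p.1 p.2).
Proof.
exact: (eq_bounded_mfun _ (bounded_mfunD bounded_mfun_W (bounded_mfun_cst (- (1 / 2))))).
Qed.

Lemma bounded_mfunU {d} {T : measurableType d} (pi pj : T -> R) :
  measurable_fun setT pi -> measurable_fun setT pj ->
  bounded_mfun (fun q => U (pi q) (pj q)).
Proof.
by move=> mi mj; exact: bounded_mfun_comp bounded_mfun_U (measurable_fun_pair mi mj).
Qed.

Lemma bounded_mfunUr x : bounded_mfun (U x).
Proof. exact: bounded_mfun_pair2 x bounded_mfun_U. Qed.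

Definition deg x := int01 (U x).
Definition codeg x z := int01 (fun y => U x y * U y z).
Definition tri z := int01 (fun x => U z x * codeg x z).

Definition edge_dens := int01 deg.
Definition cherry_dens := int01 (fun x => deg x ^+ 2).
Definition c4_dens := int2 (fun x z => codeg x z ^+ 2).
Definition paw_dens := int01 (fun z => deg z * tri z).

Lemma codeg_sym x z : codeg x z = codeg z x.
Proof. by apply: eq_int01 => y; rewrite mulrC (U_sym x y) (U_sym y z). Qed.

Lemma bounded_mfun_deg : bounded_mfun deg.
Proof. exact: bounded_mfun_int01 bounded_mfun_U. Qed.

Lemma bounded_mfun_codeg : bounded_mfun (fun p : R * R => codeg p.1 p.2).
Proof.
apply: bounded_mfun_int01; apply: bounded_mfunM; apply: bounded_mfunU; measurable_proj.
Qed.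

Lemma bounded_mfun_codeg_swap : bounded_mfun (fun p : R * R => codeg p.2 p.1).
Proof. by apply: (eq_bounded_mfun _ bounded_mfun_codeg) => p; rewrite codeg_sym. Qed.

Lemma bounded_mfun_codegr x : bounded_mfun (codeg x).
Proof. exact: bounded_mfun_pair2 x bounded_mfun_codeg. Qed.

Lemma bounded_mfun_codegl z : bounded_mfun (codeg^~ z).
Proof. exact: bounded_mfun_pair1 z bounded_mfun_codeg. Qed.

Lemma bounded_mfun_tri : bounded_mfun tri.
Proof. exact: bounded_mfun_int01 (bounded_mfunM bounded_mfun_U bounded_mfun_codeg_swap). Qed.

Lemma bounded_mfun_degP {d} {T : measurableType d} (pi : T -> R) :
  measurable_fun setT pi -> bounded_mfun (fun q => deg (pi q)).
Proof. exact: bounded_mfun_comp bounded_mfun_deg. Qed.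

Lemma bounded_mfun_codegP {d} {T : measurableType d} (pi pj : T -> R) :
  measurable_fun setT pi -> measurable_fun setT pj ->
  bounded_mfun (fun q => codeg (pi q) (pj q)).
Proof.
by move=> mi mj; exact: bounded_mfun_comp bounded_mfun_codeg (measurable_fun_pair mi mj).
Qed.

Ltac bounded_mfun_tac :=
  repeat match goal with
  | |- bounded_mfun (fun _ => _ + _) => apply: bounded_mfunD; cbv beta
  | |- bounded_mfun (fun _ => _ * _) => apply: bounded_mfunM; cbv beta
  | |- bounded_mfun (U _) => exact: bounded_mfunUr
  | |- bounded_mfun deg => exact: bounded_mfun_deg
  | |- bounded_mfun (codeg _) => exact: bounded_mfun_codegr
  | |- bounded_mfun (fun _ => U _ _) => apply: bounded_mfunU; measurable_proj
  | |- bounded_mfun (fun _ => deg _) => apply: bounded_mfun_degP; measurable_proj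
  | |- bounded_mfun (fun _ => codeg _ _) => apply: bounded_mfun_codegP; measurable_proj
  | |- bounded_mfun (fun _ => _) => exact: bounded_mfun_cst
  end.

Lemma int2_U_deg : int2 (fun a c => U a c * deg c) = cherry_dens.
Proof.
rewrite /int2 (fubini_int01 (fun a c => U a c * deg c)); last first.
  exact: bounded_mfunM bounded_mfun_U (bounded_mfun_comp bounded_mfun_deg measurable_snd).
apply: eq_int01 => c; rewrite (eq_int01 (g := fun a => deg c * U c a)).
  by rewrite int01Zl ?expr2//; exact: bounded_mfunUr.
by move=> a; rewrite mulrC U_sym.
Qed.

Lemma int2_codeg : int2 codeg = cherry_dens.
Proof.
rewrite -int2_U_deg; apply: eq_int01 => a.
rewrite /codeg (fubini_int01 (fun b c => U a c * U c b)); last by bounded_mfun_tac.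
by apply: eq_int01 => c; rewrite int01Zl//; exact: bounded_mfunUr.
Qed.

Lemma int4_ab_bc : int4 (fun a b c d => U a b * U b c) = cherry_dens.
Proof.
rewrite (int4_int01 _ (fun a b c => U a b * U b c)); last by move=> *; rewrite int01_cst.
rewrite (int3_int01 _ (fun a b => U a b * deg b)) ?int2_U_deg// => a b.
by rewrite int01Zl//; exact: bounded_mfunUr.
Qed.

Lemma int4_ab_cd : int4 (fun a b c d => U a b * U c d) = edge_dens ^+ 2.
Proof.
rewrite (int4_int01 _ (fun a b c => U a b * deg c)); last first.
  by move=> a b c; rewrite int01Zl//; exact: bounded_mfunUr.
rewrite (int3_int01 _ (fun a b => U a b * edge_dens)); last first.
  by move=> a b; rewrite int01Zl//; exact: bounded_mfun_deg.
rewrite (int2_int01 _ (fun a => edge_dens * deg a)); last first.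
  by move=> a; rewrite int01Zr 1?mulrC//; exact: bounded_mfunUr.
by rewrite int01Zl ?expr2//; exact: bounded_mfun_deg.
Qed.

Lemma int4_ab_da : int4 (fun a b c d => U a b * U d a) = cherry_dens.
Proof.
rewrite (int4_int01 _ (fun a b c => U a b * deg a)); last first.
  move=> a b c; rewrite (eq_int01 (g := fun d => U a b * U a d)) => [|d];
    last by rewrite (U_sym d a).
  by rewrite int01Zl//; exact: bounded_mfunUr.
rewrite (int3_int01 _ (fun a b => U a b * deg a)); last by move=> a b; rewrite int01_cst.
rewrite (int2_int01 _ (fun a => deg a ^+ 2))// => a.
by rewrite int01Zr ?expr2//; exact: bounded_mfunUr.
Qed.

Lemma int4_bc_cd : int4 (fun a b c d => U b c * U c d) = cherry_dens.
Proof.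
rewrite (int4_int01 _ (fun a b c => U b c * deg c)); last first.
  by move=> a b c; rewrite int01Zl//; exact: bounded_mfunUr.
by rewrite /int3 (eq_int01 (g := fun _ => cherry_dens)) ?int01_cst// => a; exact: int2_U_deg.
Qed.

Lemma int4_bc_da : int4 (fun a b c d => U b c * U d a) = edge_dens ^+ 2.
Proof.
rewrite (int4_int01 _ (fun a b c => U b c * deg a)); last first.
  move=> a b c; rewrite (eq_int01 (g := fun d => U b c * U a d)) => [|d];
    last by rewrite (U_sym d a).
  by rewrite int01Zl//; exact: bounded_mfunUr.
rewrite (int3_int01 _ (fun a b => deg b * deg a)); last first.
  by move=> a b; rewrite int01Zr//; exact: bounded_mfunUr.
rewrite (int2_int01 _ (fun a => edge_dens * deg a)); last first.
  by move=> a; rewrite int01Zr//; exact: bounded_mfun_deg.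
by rewrite int01Zl ?expr2//; exact: bounded_mfun_deg.
Qed.

Lemma int4_cd_da : int4 (fun a b c d => U c d * U d a) = cherry_dens.
Proof.
rewrite (int4_int01 _ (fun a b c => codeg c a))// -int2_codeg.
apply: eq_int01 => a; rewrite /int2 int01_cst.
by apply: eq_int01 => c; rewrite codeg_sym.
Qed.

Lemma int4_ac_ab : int4 (fun a b c d => U a c * U a b) = cherry_dens.
Proof.
rewrite (int4_int01 _ (fun a b c => U a c * U a b)); last by move=> *; rewrite int01_cst.
rewrite (int3_int01 _ (fun a b => deg a * U a b)); last first.
  by move=> a b; rewrite int01Zr//; exact: bounded_mfunUr.
rewrite (int2_int01 _ (fun a => deg a ^+ 2))// => a.
by rewrite int01Zl ?expr2//; exact: bounded_mfunUr.
Qed.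

Lemma int4_ac_bc : int4 (fun a b c d => U a c * U b c) = cherry_dens.
Proof.
rewrite (int4_int01 _ (fun a b c => U a c * U b c)); last by move=> *; rewrite int01_cst.
rewrite (int3_int01 _ codeg) ?int2_codeg// => a b.
by apply: eq_int01 => c; rewrite (U_sym b c).
Qed.

Lemma int4_ac_cd : int4 (fun a b c d => U a c * U c d) = cherry_dens.
Proof.
rewrite (int4_int01 _ (fun a b c => U a c * deg c)); last first.
  by move=> a b c; rewrite int01Zl//; exact: bounded_mfunUr.
by rewrite -int2_U_deg; apply: eq_int01 => a; rewrite /int2 int01_cst.
Qed.

Lemma int4_ac_da : int4 (fun a b c d => U a c * U d a) = cherry_dens.
Proof.
rewrite (int4_int01 _ (fun a b c => U a c * deg a)); last first.
  move=> a b c; rewrite (eq_int01 (g := fun d => U a c * U a d)) => [|d];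
    last by rewrite (U_sym d a).
  by rewrite int01Zl//; exact: bounded_mfunUr.
rewrite (int3_int01 _ (fun a b => deg a ^+ 2)); last first.
  by move=> a b; rewrite int01Zr ?expr2//; exact: bounded_mfunUr.
by apply: eq_int01 => a; rewrite int01_cst.
Qed.

Lemma int4_ab_bc_cd_da :
  int4 (fun a b c d => U a b * U b c * U c d * U d a) = c4_dens.
Proof.
rewrite (int4_int01 _ (fun a b c => U a b * U b c * codeg c a)); last first.
  move=> a b c; rewrite /codeg -int01Zl; last by bounded_mfun_tac.
  by apply: eq_int01 => d; rewrite !mulrA.
apply: eq_int01 => a; rewrite /int2 (fubini_int01 (fun b c => U a b * U b c * codeg c a));
  last by bounded_mfun_tac.
apply: eq_int01 => c; rewrite int01Zr; last by bounded_mfun_tac.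
by rewrite (codeg_sym c a).
Qed.

Lemma int4_ac_bc_cd_da :
  int4 (fun a b c d => U a c * U b c * U c d * U d a) = paw_dens.
Proof.
rewrite (int4_int01 _ (fun a b c => U a c * U b c * codeg c a)); last first.
  move=> a b c; rewrite /codeg -int01Zl; last by bounded_mfun_tac.
  by apply: eq_int01 => d; rewrite !mulrA.
rewrite /int3 (eq_int01 (g := fun a => int01 (fun c => U a c * codeg c a * deg c)));
  last first.
  move=> a; rewrite /int2 (fubini_int01 (fun b c => U a c * U b c * codeg c a));
    last by bounded_mfun_tac.
  apply: eq_int01 => c; rewrite /deg -int01Zl; last by bounded_mfun_tac.
  by apply: eq_int01 => b; rewrite (U_sym b c); ring.
rewrite (fubini_int01 (fun a c => U a c * codeg c a * deg c)); last by bounded_mfun_tac.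
apply: eq_int01 => c; rewrite [RHS]mulrC /tri -int01Zr; last by bounded_mfun_tac.
by apply: eq_int01 => a; rewrite (U_sym a c) (codeg_sym c a).
Qed.

Lemma int4_ac_ab_cd_da :
  int4 (fun a b c d => U a c * U a b * U c d * U d a) = paw_dens.
Proof.
rewrite (int4_int01 _ (fun a b c => U a c * U a b * codeg c a)); last first.
  move=> a b c; rewrite /codeg -int01Zl; last by bounded_mfun_tac.
  by apply: eq_int01 => d; rewrite !mulrA.
rewrite (int3_int01 _ (fun a b => U a b * tri a)); last first.
  move=> a b; rewrite /tri -int01Zl; last by bounded_mfun_tac.
  by apply: eq_int01 => c; ring.
by apply: eq_int01 => a; rewrite int01Zr//; exact: bounded_mfunUr.
Qed.

Lemma int4_ac_ab_bc_da :
  int4 (fun a b c d => U a c * U a b * U b c * U d a) = paw_dens.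
Proof.
rewrite (int4_int01 _ (fun a b c => U a c * U a b * U b c * deg a)); last first.
  move=> a b c; rewrite /deg -int01Zl; last exact: bounded_mfunUr.
  by apply: eq_int01 => d; rewrite (U_sym d a).
rewrite (int3_int01 _ (fun a b => U a b * deg a * codeg a b)); last first.
  move=> a b; rewrite /codeg -int01Zl; last by bounded_mfun_tac.
  by apply: eq_int01 => c; rewrite (U_sym b c); ring.
apply: eq_int01 => a; rewrite /tri -int01Zl; last by bounded_mfun_tac.
by apply: eq_int01 => b; rewrite (codeg_sym a b); ring.
Qed.

Lemma int4_ac_ab_bc_cd :
  int4 (fun a b c d => U a c * U a b * U b c * U c d) = paw_dens.
Proof.
rewrite (int4_int01 _ (fun a b c => U a c * U a b * U b c * deg c)); last first.
  by move=> a b c; rewrite int01Zl//; exact: bounded_mfunUr.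
rewrite /int3 (eq_int01 (g := fun a => int01 (fun c => U a c * deg c * codeg a c)));
  last first.
  move=> a; rewrite /int2 (fubini_int01 (fun b c => U a c * U a b * U b c * deg c));
    last by bounded_mfun_tac.
  apply: eq_int01 => c; rewrite /codeg -int01Zl; last by bounded_mfun_tac.
  by apply: eq_int01 => b; ring.
rewrite (fubini_int01 (fun a c => U a c * deg c * codeg a c)); last by bounded_mfun_tac.
apply: eq_int01 => c; rewrite /tri -int01Zl; last by bounded_mfun_tac.
by apply: eq_int01 => a; rewrite (U_sym a c) (codeg_sym a c); ring.
Qed.

Lemma sqr_tri_le z : tri z ^+ 2 <= 1 / 4 * int01 (fun x => codeg z x ^+ 2).
Proof.
have bUc := bounded_mfunM (bounded_mfunUr z) (bounded_mfun_codegl z).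
have bUc2 : bounded_mfun (fun x => (U z x * codeg x z) ^+ 2) := bounded_mfunM bUc bUc.
have bc2 : bounded_mfun (fun x => 1 / 4 * codeg z x ^+ 2).
  exact: bounded_mfunZ (bounded_mfunM (bounded_mfun_codegr z) (bounded_mfun_codegr z)).
apply: le_trans (sqr_int01_le bUc) _.
rewrite -int01Zl; last exact: bounded_mfunM (bounded_mfun_codegr z) (bounded_mfun_codegr z).
apply: ler_int01 => // x.
by rewrite exprMn (codeg_sym x z) ler_wpM2r ?sqr_ge0 ?sqrU_le.
Qed.

Lemma int01_sqr_tri_le : int01 (fun z => tri z ^+ 2) <= 1 / 4 * c4_dens.
Proof.
have bc : bounded_mfun (fun z => int01 (fun x => codeg z x ^+ 2)).
  exact: bounded_mfun_int01 (bounded_mfunM bounded_mfun_codeg bounded_mfun_codeg).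
have bt2 : bounded_mfun (fun z => tri z ^+ 2) := bounded_mfunM bounded_mfun_tri bounded_mfun_tri.
have bc4 : bounded_mfun (fun z => 1 / 4 * int01 (fun x => codeg z x ^+ 2)) := bounded_mfunZ _ bc.
have -> : c4_dens = int01 (fun z => int01 (fun x => codeg z x ^+ 2)) by [].
rewrite -int01Zl; last exact: bc.
by apply: (ler_int01 bt2 bc4) => z; exact: sqr_tri_le.
Qed.

Lemma c4_dens_ge0 : 0 <= c4_dens.
Proof. by do 2 apply: int01_ge0 => ?; exact: sqr_ge0. Qed.

Ltac bounded_mfun4_tac :=
  match goal with |- bounded_mfun4 _ =>
    rewrite /bounded_mfun4 /uncurry4; cbv beta; bounded_mfun_tac
  end.

Lemma m4_diamond : m4 diamond_edges W - 1 / 16 =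
  2 * cherry_dens + edge_dens ^+ 2 / 2 + c4_dens + 4 * paw_dens.
Proof.
rewrite /m4 (t4_int4 _ _ bounded_mfun_W) (t4_int4 _ (fun x y => 1 - W x y) bounded_mfun_1W).
rewrite -int4D; [|exact: bounded_mfun4_hom diamond_edges W bounded_mfun_W
                 |exact: bounded_mfun4_hom diamond_edges (fun x y => 1 - W x y) bounded_mfun_1W].
(* The monomials of odd degree in U cancel. *)
rewrite (eq_int4 _ (fun a b c d => 1 / 16
  + (1 / 4 * (U a b * U b c + (U a b * U c d + (U a b * U d a + (U b c * U c d
      + (U b c * U d a + (U c d * U d a + (U a c * U a b + (U a c * U b c
      + (U a c * U c d + U a c * U d a)))))))))
  + (U a b * U b c * U c d * U d a + (U a c * U b c * U c d * U d a
      + (U a c * U a b * U c d * U d a + (U a c * U a b * U b c * U d a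
      + U a c * U a b * U b c * U c d))))))); last first.
  by move=> a b c d; rewrite hom4_diamond (hom4_diamond (fun x y => 1 - W x y)) /U; field.
rewrite !int4D; try bounded_mfun4_tac.
rewrite int4_cst int4Zl; last bounded_mfun4_tac.
rewrite !int4D; try bounded_mfun4_tac.
rewrite int4_ab_bc int4_ab_cd int4_ab_da int4_bc_cd int4_bc_da int4_cd_da int4_ac_ab.
rewrite int4_ac_bc int4_ac_cd int4_ac_da int4_ab_bc_cd_da int4_ac_bc_cd_da.
rewrite int4_ac_ab_cd_da int4_ac_ab_bc_da int4_ac_ab_bc_cd.
by lra.
Qed.

Lemma m4_C4 : m4 C4_edges W - 1 / 8 = 2 * cherry_dens + edge_dens ^+ 2 + 2 * c4_dens.
Proof.
rewrite /m4 (t4_int4 _ _ bounded_mfun_W) (t4_int4 _ (fun x y => 1 - W x y) bounded_mfun_1W).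
rewrite -int4D; [|exact: bounded_mfun4_hom C4_edges W bounded_mfun_W
                 |exact: bounded_mfun4_hom C4_edges (fun x y => 1 - W x y) bounded_mfun_1W].
rewrite (eq_int4 _ (fun a b c d => 1 / 8
  + (1 / 2 * (U a b * U b c + (U a b * U c d + (U a b * U d a + (U b c * U c d
      + (U b c * U d a + U c d * U d a)))))
  + 2 * (U a b * U b c * U c d * U d a)))); last first.
  by move=> a b c d; rewrite hom4_C4 (hom4_C4 (fun x y => 1 - W x y)) /U; field.
rewrite !int4D; try bounded_mfun4_tac.
rewrite int4_cst !int4Zl; try bounded_mfun4_tac.
rewrite !int4D; try bounded_mfun4_tac.
rewrite int4_ab_bc int4_ab_cd int4_ab_da int4_bc_cd int4_bc_da int4_cd_da.
rewrite int4_ab_bc_cd_da.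
by lra.
Qed.

End graphon_densities.

Lemma diamond_C4_inequality {R : rcfType} {c s e t p g : R} :
  0 <= c -> c <= (3 - Num.sqrt 5) / 4 ->
  0 <= t -> g <= 1 / 4 * t -> 0 <= (1 - c) ^+ 2 * s + 2 * (1 - c) * p + g ->
  c * (2 * s + e ^+ 2 + 2 * t) <= 2 * s + e ^+ 2 / 2 + t + 4 * p.
Proof.
move=> c0 cle t0 gt comb.
have r0 : 0 <= Num.sqrt (5 : R) := sqrtr_ge0 5.
have r2 : Num.sqrt (5 : R) * Num.sqrt 5 = 5 by rewrite -expr2 sqr_sqrtr.
have c_le_half : c <= 1 / 2.
  have : 1 <= Num.sqrt (5 : R) by nra.
  lra.
(* (3 - 4c)^2 >= 5 is the same as (1 - c)(1 - 2c) >= 1/2. *)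
have key : 1 / 2 <= (1 - c) * (1 - 2 * c).
  have : Num.sqrt 5 * Num.sqrt 5 <= (3 - 4 * c) * (3 - 4 * c).
    by apply: ler_pM => //; lra.
  by rewrite r2; nra.
have e2 : 0 <= e ^+ 2 := sqr_ge0 e.
set X := 2 * (1 - c) * s + (1 / 2 - c) * e ^+ 2 + (1 - 2 * c) * t + 4 * p.
have : 0 <= (1 - c) / 2 * X.
  have -> : (1 - c) / 2 * X = ((1 - c) ^+ 2 * s + 2 * (1 - c) * p + g)
      + ((1 - c) * (1 - 2 * c) / 2 - 1 / 4) * t + (1 / 4 * t - g)
      + (1 - c) / 2 * (1 / 2 - c) * e ^+ 2 by rewrite /X; field.
  have : 0 <= ((1 - c) * (1 - 2 * c) / 2 - 1 / 4) * t by apply: mulr_ge0 => //; lra.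
  have : 0 <= (1 - c) / 2 * (1 / 2 - c) * e ^+ 2.
    by apply: mulr_ge0 => //; apply: mulr_ge0; lra.
  lra.
rewrite pmulr_rge0; last lra.
by rewrite /X; lra.
Qed.

Theorem lemma4p2 (R : realType) (c : R) (W : R -> R -> R) :
  0 <= c -> c <= (3 - Num.sqrt 5) / 4 -> graphon W ->
  m4 diamond_edges W - 1 / 16 >= c * (m4 C4_edges W - 1 / 8).
Proof.
move=> c0 cle gW.
have := diamond_C4_inequality (e := edge_dens W) c0 cle (c4_dens_ge0 W) (int01_sqr_tri_le W gW)
  (int01_sqr_combination_ge0 (1 - c) (bounded_mfun_deg W gW) (bounded_mfun_tri W gW)).
by rewrite -(m4_diamond W gW) -(m4_C4 W gW).
Qed.
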